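(* Let $n\ge 2$ be an integer and $A\subseteq L_n$. The following are equivalent: (i) $(X_n,\tau(A))$ is normal; (ii) the subset $L_n$ is $C^*$-embedded in $(X_n,\tau(A))$; (iii) the subset $L_n$ is $z$-embedded in $(X_n,\tau(A))$.
   Context: For $\overline{x},\overline{a}\in\mathbb R^n$ let $|\overline{x}-\overline{a}|$ be the Euclidean distance and $B(\overline{a},\epsilon)=\{\overline{x}\in\mathbb R^n:|\overline{x}-\overline{a}|<\epsilon\}$. Let $P_n=\{\overline{x}\in\mathbb R^n: x_n>0\}$, $L_n=\{\overline{x}\in\mathbb R^n: x_n=0\}$, $X_n=P_n\cup L_n$. For $\overline{a}\in L_n$ and $\epsilon>0$ put $\overline{a(\epsilon)}=(a_1,\dots,a_{n-1},\epsilon)$ and $\tilde B(\overline{a},\epsilon)=\{\overline{a}\}\cup B(\overline{a(\epsilon)},\epsilon)$. For $A\subseteq L_n$, the topology $\tau(A)$ on $X_n$ is generated by the local bases: at $\overline{a}\in P_n$, the sets $B(\overline{a},\epsilon)$ with $0<\epsilon<a_n$; at $\overline{a}\in A$, the sets $B(\overline{a},\epsilon)\cap X_n$ with $\epsilon>0$; at $\overline{a}\in L_n\setminus A$, the sets $\tilde B(\overline{a},\epsilon)$ with $\epsilon>0$. A subset $Y$ of a space $X$ is $C^*$-embedded in $X$ if every bounded continuous real function on $Y$ extends to a bounded continuous real function on $X$; $Y$ is $z$-embedded in $X$ if every zero set of $Y$ is the trace on $Y$ of some zero set of $X$. *)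

From Stdlib Require Import Reals.
From mathcomp Require Import all_boot.
Set Implicit Arguments. Unset Strict Implicit. Unset Printing Implicit Defensive.
Open Scope R_scope.

Definition pt (n : nat) := 'I_n -> R.

(* last coordinate x_n (the case n = 0 is irrelevant, n >= 2 below) *)
Definition lastc (n : nat) : pt n -> R :=
  match n return pt n -> R with
  | 0%N => fun _ => 0
  | m.+1 => fun x => x ord_max
  end.

Definition edist (n : nat) (x a : pt n) : R :=
  sqrt (\big[Rplus/0]_(i < n) ((x i - a i) ^ 2)).

Definition ball (n : nat) (a : pt n) (eps : R) : pt n -> Prop :=
  fun x => edist x a < eps.

Definition Pn (n : nat) : pt n -> Prop := fun x => lastc x > 0.
Definition Ln (n : nat) : pt n -> Prop := fun x => lastc x = 0.
Definition Xn (n : nat) : pt n -> Prop := fun x => Pn x \/ Ln x.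

Definition shift (n : nat) (a : pt n) (eps : R) : pt n :=
  fun i => if nat_of_ord i == n.-1 then eps else a i.

Definition tball (n : nat) (a : pt n) (eps : R) : pt n -> Prop :=
  fun x => x = a \/ ball (shift a eps) eps x.

(* The topology tau(A) on X_n: a set U (of points of X_n) is open iff it
   contains a basic neighbourhood of each of its points. *)
Definition tau_open (n : nat) (A : pt n -> Prop) (U : pt n -> Prop) : Prop :=
  (forall x, U x -> Xn x) /\
  (forall x, U x ->
     (Pn x -> exists eps, 0 < eps < lastc x /\ forall y, ball x eps y -> U y) /\
     (A x -> exists eps, 0 < eps /\ forall y, ball x eps y -> Xn y -> U y) /\
     (Ln x -> ~ A x -> exists eps, 0 < eps /\ forall y, tball x eps y -> U y)).

Definition closed_in {T : Type} (X : T -> Prop) (op : (T -> Prop) -> Prop)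
  (C : T -> Prop) : Prop :=
  (forall x, C x -> X x) /\ op (fun x => X x /\ ~ C x).

Definition normal_space {T : Type} (X : T -> Prop) (op : (T -> Prop) -> Prop) : Prop :=
  forall C D, closed_in X op C -> closed_in X op D ->
    (forall x, C x -> D x -> False) ->
    exists U V, op U /\ op V /\ (forall x, C x -> U x) /\ (forall x, D x -> V x) /\
      (forall x, U x -> V x -> False).

Definition R_open (V : R -> Prop) : Prop :=
  forall r, V r -> exists eps, 0 < eps /\ forall s, Rabs (s - r) < eps -> V s.

Definition cont_on {T : Type} (op : (T -> Prop) -> Prop) (Y : T -> Prop)
  (f : T -> R) : Prop :=
  forall V, R_open V -> exists U, op U /\ forall y, Y y -> (V (f y) <-> U y).

Definition bounded_on {T : Type} (Y : T -> Prop) (f : T -> R) : Prop :=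
  exists M, forall y, Y y -> Rabs (f y) <= M.

Definition Cstar_embedded {T : Type} (X : T -> Prop) (op : (T -> Prop) -> Prop)
  (Y : T -> Prop) : Prop :=
  forall f, cont_on op Y f -> bounded_on Y f ->
    exists g, cont_on op X g /\ bounded_on X g /\ forall y, Y y -> g y = f y.

Definition zero_set_of {T : Type} (op : (T -> Prop) -> Prop) (Y : T -> Prop)
  (Z : T -> Prop) : Prop :=
  exists f, cont_on op Y f /\ forall y, Z y <-> (Y y /\ f y = 0).

Definition z_embedded {T : Type} (X : T -> Prop) (op : (T -> Prop) -> Prop)
  (Y : T -> Prop) : Prop :=
  forall Z, zero_set_of op Y Z ->
    exists Z', zero_set_of op X Z' /\ forall y, Y y -> (Z y <-> Z' y).

(* All three conditions are tied to one property of L, [level_separable]: for every continuous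
   f on L and c > 0 the sets {f <= -c} and {f >= c} are separated by a continuous
   phi : X -> [-1, 1].  It gives C*-embedding by Tietze's iteration, each step shrinking the
   residual by the factor 2/3.  Normality gives it by Urysohn's lemma, since L is closed.
   z-embedding gives it as well: if g1, g2 on X have the same zeros on L as (f + c)^+ and
   (c - f)^+, then (|g1| - |g2|) / (|g1| + |g2| + x_n) separates.  C*-embedding implies
   z-embedding in any space.  Finally z-embedding implies normality: for disjoint closed H, K
   the points of L \ A are isolated in L, so Euclidean distances to H and K give a continuous
   function on L separating their traces, and the sign of a separating phi on X splits a
   neighbourhood of the traces; around the points of H and K off L one adds small Euclidean
   balls, which near a point of L \ A stay outside a small tangent ball. *)

From Stdlib Require Import Reals Lra Wf_nat ClassicalEpsilon Classical FunctionalExtensionality.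
From HB Require Import structures.
From mathcomp Require Import all_boot zify.
Set Implicit Arguments. Unset Strict Implicit.
Open Scope R_scope.

HB.instance Definition _ :=
  Monoid.isComLaw.Build R 0 Rplus (fun x y z => esym (Rplus_assoc x y z)) Rplus_comm Rplus_0_l.

Lemma Rabs_le_inv u v : Rabs u <= v -> - v <= u <= v.
Proof. by move=> h; split; [have := Rle_abs (- u); rewrite Rabs_Ropp | have := Rle_abs u]; lra. Qed.

Lemma Rmax0_lip1 v w : Rabs (Rmax v 0 - Rmax w 0) <= Rabs (v - w).
Proof.
rewrite /Rmax; case: Rle_dec; case: Rle_dec => ? ?; apply: Rabs_le;
  have := Rle_abs (v - w); have := Rle_abs (- (v - w)); rewrite Rabs_Ropp; lra.
Qed.

Lemma Rmin1_lip1 v w : Rabs (Rmin v 1 - Rmin w 1) <= Rabs (v - w).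
Proof.
rewrite /Rmin; case: Rle_dec; case: Rle_dec => ? ?; apply: Rabs_le;
  have := Rle_abs (v - w); have := Rle_abs (- (v - w)); rewrite Rabs_Ropp; lra.
Qed.

Lemma Rabs_eq0 t : Rabs t = 0 -> t = 0.
Proof. by have [//|/Rabs_no_R0] := Req_dec t 0. Qed.

Lemma Rmax0_eq0 t : Rmax t 0 = 0 <-> t <= 0.
Proof. by rewrite /Rmax; case: Rle_dec => ?; split => ?; lra. Qed.

Lemma continuity_pt_eps (g : R -> R) u : continuity_pt g u ->
  forall e, 0 < e -> exists d, 0 < d /\ forall v, Rabs (v - u) < d -> Rabs (g v - g u) < e.
Proof.
move=> g_cont e e_gt0; have [d [d_gt0 near]] := g_cont e e_gt0; exists d; split => // v v_near.
have [->|v_neq] := Req_dec v u; first by rewrite Rminus_diag Rabs_R0.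
by apply: (near v); split; [split => //; apply: not_eq_sym | ].
Qed.

Lemma continuity_pt_lip1 (g : R -> R) u :
  (forall v w, Rabs (g v - g w) <= Rabs (v - w)) -> continuity_pt g u.
Proof.
move=> g_lip e e_gt0; exists e; split => // v [_ v_near].
by apply: Rle_lt_trans (g_lip v u) _.
Qed.

Lemma continuity_pt_self u : continuity_pt (fun t => t) u.
Proof. by apply: continuity_pt_lip1 => v w; apply: Rle_refl. Qed.

Lemma geometric_small c q eps : 0 <= q < 1 -> 0 < eps -> exists k, c * q ^ k < eps.
Proof.
move=> q_bounds eps_gt0; have c1_gt0 : 0 < Rabs c + 1 by have := Rabs_pos c; lra.
have [K qK_small] := pow_lt_1_zero q ltac:(rewrite Rabs_pos_eq; lra)
  (eps / (Rabs c + 1)) (Rdiv_lt_0_compat _ _ eps_gt0 c1_gt0).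
exists K; have qK_ge0 : 0 <= q ^ K by apply: pow_le; lra.
have := qK_small K (le_n K); rewrite Rabs_pos_eq // => /(Rmult_lt_compat_l _ _ _ c1_gt0).
have -> : (Rabs c + 1) * (eps / (Rabs c + 1)) = eps by field; lra.
have : c * q ^ K <= (Rabs c + 1) * q ^ K by apply: Rmult_le_compat_r => //; have := Rle_abs c; lra.
lra.
Qed.

Lemma Un_cv_dist_le (u : nat -> R) l a b k :
  Un_cv u l -> (forall p, Rabs (u (k + p)%nat - a) <= b) -> Rabs (l - a) <= b.
Proof.
move=> u_cv u_near; apply: Rnot_lt_le => far.
have [K K_near] := u_cv (Rabs (l - a) - b) ltac:(lra).
have := K_near (k + K)%nat ltac:(apply/leP; exact: leq_addl); rewrite /R_dist Rabs_minus_sym.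
have := u_near K; have := Rabs_triang (l - u (k + K)%nat) (u (k + K)%nat - a).
have -> : l - u (k + K)%nat + (u (k + K)%nat - a) = l - a by ring.
lra.
Qed.

Lemma uniform_cauchy_limit {T : Type} (Y : T -> Prop) (S : nat -> T -> R) (r : nat -> R) :
  (forall eps, 0 < eps -> exists k, r k < eps) ->
  (forall x k p, Y x -> Rabs (S (k + p)%nat x - S k x) <= r k) ->
  exists G, forall x k, Y x -> Rabs (G x - S k x) <= r k.
Proof.
move=> r_small S_cauchy.
have S_cv x : Y x -> exists l, Un_cv (fun k => S k x) l.
  move=> Yx; suff /R_complete [l ?] : Cauchy_crit (fun k => S k x) by exists l.
  move=> eps eps_gt0; have [K rK] := r_small (eps / 2) ltac:(lra).
  have near k : (K <= k)%N -> Rabs (S k x - S K x) <= r K.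
    by move=> /subnKC <-; apply: S_cauchy.
  exists K => k p /leP /near near_k /leP /near near_p; rewrite /R_dist.
  have := Rabs_triang (S k x - S K x) (S K x - S p x); rewrite (Rabs_minus_sym (S K x)).
  have -> : S k x - S K x + (S K x - S p x) = S k x - S p x by ring.
  lra.
exists (fun x => epsilon (inhabits 0) (fun l => Y x -> Un_cv (fun k => S k x) l)) => x k Yx.
apply: (@Un_cv_dist_le (fun j => S j x) _ _ _ k) => [|p]; last exact: S_cauchy.
have [l l_lim] := S_cv x Yx.
have := @epsilon_spec R (inhabits 0) (fun l => Y x -> Un_cv (fun k => S k x) l).
by apply => //; exists l.
Qed.

Definition is_glb (S : R -> Prop) l :=
  (forall r, S r -> l <= r) /\ forall b, (forall r, S r -> b <= r) -> b <= l.

Definition rinf (S : R -> Prop) := epsilon (inhabits 0) (is_glb S).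

Lemma rinf_glb (S : R -> Prop) b :
  (exists r, S r) -> (forall r, S r -> b <= r) -> is_glb S (rinf S).
Proof.
move=> [r0 Sr0] b_low; apply: epsilon_spec.
have [M [M_ub M_least]] := completeness (fun t => S (- t))
  ltac:(by exists (- b) => t /b_low; lra) ltac:(by exists (- r0); rewrite Ropp_involutive).
exists (- M); split=> [r Sr|b' b'_low].
  have : - r <= M by apply: M_ub; rewrite /= Ropp_involutive.
  lra.
have : M <= - b' by apply: M_least => t /b'_low; lra.
lra.
Qed.

Lemma INR_exp2 n : INR (2 ^ n)%N = 2 ^ n.
Proof. by elim: n => [|n IHn] //=; rewrite expnS -multE mult_INR IHn. Qed.

Lemma pow2_gt0 n : 0 < 2 ^ n.
Proof. by apply: pow_lt; lra. Qed.

Section EuclideanDistance.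
Variable n : nat.
Implicit Types (x y z : pt n) (F G : 'I_n -> R).

Lemma sumR_ge0 F : (forall i, 0 <= F i) -> 0 <= \big[Rplus/0]_(i < n) F i.
Proof. by move=> F_ge0; apply: (big_ind (fun s => 0 <= s)) => //; [lra | move=> ? ?; lra]. Qed.

Lemma sumRD1 F j :
  \big[Rplus/0]_(i < n) F i = F j + \big[Rplus/0]_(i < n | i != j) F i.
Proof. exact: bigD1. Qed.

Lemma sumR_ge_term F j : (forall i, 0 <= F i) -> F j <= \big[Rplus/0]_(i < n) F i.
Proof.
move=> F_ge0; rewrite (sumRD1 _ j).
have : 0 <= \big[Rplus/0]_(i < n | i != j) F i.
  by apply: (big_ind (fun s => 0 <= s)) => //; [lra | move=> ? ?; lra].
lra.
Qed.

Lemma sumR_add F G :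
  \big[Rplus/0]_(i < n) (F i + G i) = \big[Rplus/0]_(i < n) F i + \big[Rplus/0]_(i < n) G i.
Proof. exact: big_split. Qed.

Lemma sumR_scale c F : \big[Rplus/0]_(i < n) (c * F i) = c * \big[Rplus/0]_(i < n) F i.
Proof.
by apply: (big_ind2 (fun a b => a = c * b)) => [|? ? ? ? -> ->|];
  rewrite // ?Rmult_0_r ?Rmult_plus_distr_l.
Qed.

Lemma cauchy_schwarz (a b : 'I_n -> R) :
  (\big[Rplus/0]_(i < n) (a i * b i)) ^ 2 <=
  (\big[Rplus/0]_(i < n) (a i ^ 2)) * (\big[Rplus/0]_(i < n) (b i ^ 2)).
Proof.
set Saa := \big[Rplus/0]_(i < n) (a i ^ 2); set Sab := \big[Rplus/0]_(i < n) (a i * b i).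
set Sbb := \big[Rplus/0]_(i < n) (b i ^ 2).
have quad_ge0 t : 0 <= t ^ 2 * Saa + 2 * t * Sab + Sbb.
  have -> : t ^ 2 * Saa + 2 * t * Sab + Sbb = \big[Rplus/0]_(i < n) ((t * a i + b i) ^ 2).
    by rewrite /Saa /Sab /Sbb -!sumR_scale -!sumR_add; apply: eq_bigr => i _; ring.
  by apply: sumR_ge0 => i; apply: pow2_ge_0.
have Saa_ge0 : 0 <= Saa by apply: sumR_ge0 => i; apply: pow2_ge_0.
have [Saa0|Saa_neq0] := Req_dec Saa 0.
- have Sab0 : Sab = 0.
    apply: NNPP => Sab_neq0; have := quad_ge0 (- (Sbb + 1) / (2 * Sab)).
    rewrite Saa0; have -> : 2 * (- (Sbb + 1) / (2 * Sab)) * Sab = - (Sbb + 1) by field.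
    lra.
  rewrite Saa0 Sab0; lra.
- have := Rmult_le_pos _ _ Saa_ge0 (quad_ge0 (- Sab / Saa)).
  have -> : Saa * ((- Sab / Saa) ^ 2 * Saa + 2 * (- Sab / Saa) * Sab + Sbb) = Saa * Sbb - Sab ^ 2
    by field.
  lra.
Qed.

Definition sqdist x y := \big[Rplus/0]_(i < n) ((x i - y i) ^ 2).

Lemma sqdist_ge0 x y : 0 <= sqdist x y.
Proof. by apply: sumR_ge0 => i; apply: pow2_ge_0. Qed.

Lemma edist_ge0 x y : 0 <= edist x y.
Proof. exact: sqrt_pos. Qed.

Lemma edist_sqr x y : edist x y ^ 2 = sqdist x y.
Proof. by rewrite /= Rmult_1_r sqrt_sqrt //; apply: sqdist_ge0. Qed.

Lemma edist_sym x y : edist x y = edist y x.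
Proof. by rewrite /edist; congr sqrt; apply: eq_bigr => i _; ring. Qed.

Lemma edist_refl x : edist x x = 0.
Proof. by rewrite /edist big1 ?sqrt_0 // => i _; ring. Qed.

Lemma coord_dist_le x y i : Rabs (x i - y i) <= edist x y.
Proof.
rewrite -sqrt_Rsqr_abs; apply: sqrt_le_1_alt; rewrite /Rsqr.
have := @sumR_ge_term (fun j => (x j - y j) ^ 2) i (fun j => pow2_ge_0 _).
by rewrite /= Rmult_1_r; lra.
Qed.

Lemma edist_triangle x y z : edist x z <= edist x y + edist y z.
Proof.
pose a i := x i - y i; pose b i := y i - z i.
have := cauchy_schwarz a b; rewrite /edist.
set Saa := \big[Rplus/0]_(i < n) (a i ^ 2); set Sab := \big[Rplus/0]_(i < n) (a i * b i).
set Sbb := \big[Rplus/0]_(i < n) (b i ^ 2).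
have -> : \big[Rplus/0]_(i < n) ((x i - z i) ^ 2) = Saa + 2 * Sab + Sbb.
  by rewrite -sumR_scale -!sumR_add; apply: eq_bigr => i _; rewrite /a /b; ring.
move=> cs.
have Saa_ge0 : 0 <= Saa by apply: sumR_ge0 => i; apply: pow2_ge_0.
have Sbb_ge0 : 0 <= Sbb by apply: sumR_ge0 => i; apply: pow2_ge_0.
have Sab_le : Sab <= sqrt Saa * sqrt Sbb.
  rewrite -sqrt_mult //; apply: Rle_trans (Rle_abs Sab) _.
  by rewrite -sqrt_Rsqr_abs; apply: sqrt_le_1_alt; rewrite /Rsqr /=; lra.
have := sqrt_sqrt _ Saa_ge0; have := sqrt_sqrt _ Sbb_ge0.
have := sqrt_pos Saa; have := sqrt_pos Sbb.
move=> ? ? ? ?; rewrite -(sqrt_Rsqr (sqrt Saa + sqrt Sbb)); last lra.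
apply: sqrt_le_1_alt; rewrite /Rsqr; nra.
Qed.

End EuclideanDistance.

Section DistanceToSet.
Variables (n : nat) (S : pt n -> Prop).
Hypothesis S_nonempty : exists s, S s.
Implicit Types x y z : pt n.

Definition dist_set x := rinf (fun r => exists s, S s /\ r = edist x s).

Lemma dist_set_glb x : is_glb (fun r => exists s, S s /\ r = edist x s) (dist_set x).
Proof.
apply: (rinf_glb (b := 0)) => [|r [s [_ ->]]]; last exact: edist_ge0.
by have [s Ss] := S_nonempty; exists (edist x s), s.
Qed.

Lemma dist_set_le x s : S s -> dist_set x <= edist x s.
Proof. by move=> Ss; apply: (dist_set_glb x).1; exists s. Qed.

Lemma dist_set_lb x c : (forall s, S s -> c <= edist x s) -> c <= dist_set x.
Proof. by move=> c_low; apply: (dist_set_glb x).2 => r [s [Ss ->]]; apply: c_low. Qed.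

Lemma dist_set_ge0 x : 0 <= dist_set x.
Proof. by apply: dist_set_lb => s _; apply: edist_ge0. Qed.

Lemma dist_set_eq0 x : S x -> dist_set x = 0.
Proof. by move=> /(dist_set_le x); rewrite edist_refl; have := dist_set_ge0 x; lra. Qed.

Lemma dist_set_lip y z : dist_set z <= dist_set y + edist z y.
Proof.
have : dist_set z - edist z y <= dist_set y.
  by apply: dist_set_lb => s /(dist_set_le z); have := edist_triangle z y s; lra.
lra.
Qed.

End DistanceToSet.

Section HalfSpace.
Variable m : nat.
Local Notation P := (pt m.+1).
Implicit Types (b x y z w : P).

Lemma lastcE x : lastc x = x ord_max.
Proof. by []. Qed.

Lemma lastc_dist x y : Rabs (lastc x - lastc y) <= edist x y.
Proof. exact: coord_dist_le. Qed.

Lemma lastc_near x y : lastc x - edist y x <= lastc y <= lastc x + edist y x.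
Proof. by have := Rabs_le_inv (lastc_dist y x); lra. Qed.

Lemma Pn_Ln_disj x : Pn x -> Ln x -> False.
Proof. rewrite /Pn /Ln; lra. Qed.

Lemma Ln_Xn x : Ln x -> Xn x.
Proof. by right. Qed.

Lemma ball_Pn z w e : Pn z -> e <= lastc z -> ball z e w -> Pn w.
Proof. by rewrite /Pn /ball => ? ? ?; have := lastc_near z w; lra. Qed.

Lemma sqdist_shift y b e : Ln b ->
  sqdist y (shift b e) = sqdist y b - 2 * e * lastc y + e ^ 2.
Proof.
rewrite /Ln !lastcE /sqdist => b0.
rewrite (sumRD1 _ ord_max) [in RHS](sumRD1 _ ord_max) {1}/shift eqxx b0.
have -> : \big[Rplus/0]_(i < m.+1 | i != ord_max) ((y i - shift b e i) ^ 2)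
        = \big[Rplus/0]_(i < m.+1 | i != ord_max) ((y i - b i) ^ 2).
  apply: eq_bigr => i i_neq; rewrite /shift ifF //.
  by apply: contraNF i_neq => /eqP i_max; apply/eqP/val_inj.
ring.
Qed.

Lemma ball_shiftE y b e : Ln b -> 0 < e ->
  ball (shift b e) e y <-> sqdist y b < 2 * e * lastc y.
Proof.
move=> b0 e_gt0; rewrite /ball /edist -/(sqdist y _) sqdist_shift //.
have := sqdist_ge0 y (shift b e); rewrite sqdist_shift // => sq_ge0.
rewrite -[X in _ < X](sqrt_pow2 e); last lra.
split => [/sqrt_lt_0_alt|?]; [lra | apply: sqrt_lt_1_alt; lra].
Qed.

Lemma tball_cases b y e : Ln b -> 0 < e -> tball b e y ->
  y = b \/ (sqdist y b < 2 * e * lastc y /\ Pn y).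
Proof.
move=> b0 e_gt0 [->|/(ball_shiftE y b0 e_gt0) near]; [by left | right].
by split => //; have := sqdist_ge0 y b; rewrite /Pn; nra.
Qed.

Lemma tball_Xn b y e : Ln b -> 0 < e -> tball b e y -> Xn y.
Proof. by move=> b0 e_gt0 /(tball_cases b0 e_gt0) [->|[_ ?]]; [right | left]. Qed.

Lemma tball_Ln b y e : Ln b -> 0 < e -> tball b e y -> Ln y -> y = b.
Proof. by move=> b0 e_gt0 /(tball_cases b0 e_gt0) [//|[_ /Pn_Ln_disj]]. Qed.

Lemma tball_mono b y e e' : Ln b -> 0 < e' -> e' <= e -> tball b e' y -> tball b e y.
Proof.
move=> b0 e'_gt0 le_e /(tball_cases b0 e'_gt0) [->|[near y_pos]]; [by left | right].
by apply/ball_shiftE => //; [lra | rewrite /Pn in y_pos; nra].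
Qed.

Lemma tball_dist b y e : Ln b -> 0 < e -> tball b e y -> edist y b < 2 * e.
Proof.
move=> b0 e_gt0 /(tball_cases b0 e_gt0) [->|[near y_pos]]; first by rewrite edist_refl; lra.
have := lastc_dist y b; rewrite b0 Rminus_0_r Rabs_pos_eq; last by rewrite /Pn in y_pos; lra.
move: near y_pos; rewrite /Pn -edist_sqr /= Rmult_1_r; set d := edist y b => near y_pos y_le.
apply: (Rmult_lt_reg_r d); first lra.
by apply: Rlt_le_trans near _; apply: Rmult_le_compat_l; lra.
Qed.

End HalfSpace.

Lemma tangent_ball_gap eps a b d s t u : 0 < eps -> 0 <= b ->
  a ^ 2 < 2 * (eps / 6) * t -> 2 * eps * u <= b ^ 2 ->
  d < s -> 2 * s <= b -> 2 * s < u -> t <= u + d -> b <= a + d -> False.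
Proof.
move=> eps_gt0 b_ge0 a_small b_large d_lt s_le s_lt t_le b_le.
have : (b / 2) ^ 2 <= a ^ 2 by apply: pow_incr; lra.
have : eps * t < eps * (3 / 2 * u) by apply: Rmult_lt_compat_l; lra.
rewrite /=; lra.
Qed.

Section Topology.
Variables (m : nat) (A : pt m.+1 -> Prop).
Hypothesis A_Ln : forall a, A a -> Ln a.
Local Notation P := (pt m.+1).
Local Notation op := (tau_open A).
Local Notation closed := (closed_in (@Xn m.+1) op).
Implicit Types (U V : P -> Prop) (b x y z w : P).

Lemma open_Xn U x : op U -> U x -> Xn x.
Proof. by case=> + _; apply. Qed.

Lemma open_local U : (forall x, U x -> Xn x) ->
  (forall x, U x -> exists V, op V /\ V x /\ forall y, V y -> U y) -> op U.
Proof.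
move=> UX Ulocal; split=> // x /Ulocal [V [[_ oV] [Vx VU]]].
have [oP [oA oL]] := oV x Vx; split; [|split].
- by move=> /oP [eps [? ballV]]; exists eps; split => // y /ballV /VU.
- by move=> /oA [eps [? ballV]]; exists eps; split => // y ? ?; apply/VU/ballV.
- move=> Lx nAx; have [eps [? ballV]] := oL Lx nAx.
  by exists eps; split => // y /ballV /VU.
Qed.

Lemma open_ext U V : (forall x, U x <-> V x) -> op U -> op V.
Proof.
move=> UV oU; apply: open_local => [x /UV /(open_Xn oU) //|x /UV Ux].
by exists U; split => //; split => // y /UV.
Qed.

Lemma closed_ext U V : (forall x, U x <-> V x) -> closed U -> closed V.
Proof.
move=> UV [UX oU]; split=> [x /UV /UX //|]; apply: open_ext oU => x.
by split=> -[Xx nU]; split=> // /UV.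
Qed.

Lemma closedC_of_open U : op U -> closed (fun x => Xn x /\ ~ U x).
Proof.
move=> oU; split=> [x []//|]; apply: (open_ext _ oU) => x.
split=> [Ux|[Xx nnUx]]; first by split; [exact: open_Xn oU Ux | case].
by apply: NNPP => nUx; apply: nnUx.
Qed.

Lemma open_Pn_local U : (forall x, U x -> Pn x) ->
  (forall x, U x -> exists eps, 0 < eps < lastc x /\ forall y, ball x eps y -> U y) -> op U.
Proof.
move=> UP Uball; split=> [x /UP ?|x Ux]; first by left.
have x_pos := UP _ Ux; split; [by move=> _; apply: Uball | split].
- by move=> /A_Ln /(Pn_Ln_disj x_pos).
- by move=> /(Pn_Ln_disj x_pos).
Qed.

Lemma ball_inner x e z : ball x e z -> Pn z ->
  exists eps, 0 < eps < lastc z /\ forall w, ball z eps w -> ball x e w /\ Pn w.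
Proof.
rewrite /ball /Pn => z_in z_pos.
have := Rmin_l (e - edist z x) (lastc z); have := Rmin_r (e - edist z x) (lastc z).
have : 0 < Rmin (e - edist z x) (lastc z) by apply: Rmin_glb_lt; lra.
set r := Rmin _ _ => r_pos r_le r_le'.
exists (r / 2); split; first lra.
move=> w w_in; split; first by have := edist_triangle w z x; lra.
by apply: (ball_Pn z_pos _ w_in); lra.
Qed.

Lemma ball_open x e : e <= lastc x -> op (ball x e).
Proof.
move=> e_le; have ball_P z : ball x e z -> Pn z.
  by rewrite /ball /Pn => ?; have := lastc_near x z; lra.
apply: open_Pn_local => // z z_in.
have [eps [? inner]] := ball_inner z_in (ball_P _ z_in).
by exists eps; split => // w /inner [].
Qed.

Lemma Pn_open : op (@Pn m.+1).
Proof.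
apply: open_Pn_local => // x x_pos; exists (lastc x / 2).
split; first by rewrite /Pn in x_pos; lra.
by move=> y; apply: ball_Pn => //; rewrite /Pn in x_pos; lra.
Qed.

Definition trace_ball x e y := ball x e y /\ Xn y.

Lemma trace_ball_open x e : op (trace_ball x e).
Proof.
split=> [y []//|z [z_in Xz]]; rewrite /ball in z_in; split; [|split].
- move=> z_pos; have [eps [? inner]] := ball_inner z_in z_pos.
  by exists eps; split => // w /inner [? ?]; split => //; left.
- move=> _; exists (e - edist z x); split=> [|w w_near Xw]; first lra.
  by split => //; rewrite /ball in w_near *; have := edist_triangle w z x; lra.
- move=> z0 _; exists ((e - edist z x) / 2); split=> [|w w_near]; first lra.
  split; last by apply: tball_Xn w_near => //; lra.
  have := tball_dist z0 _ w_near; have := edist_triangle w z x; rewrite /ball; lra.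
Qed.

Lemma nbhd_in_ball x e : Xn x -> 0 < e ->
  exists V, op V /\ V x /\ forall y, V y -> edist y x < e.
Proof.
move=> Xx e_gt0; exists (trace_ball x e); split; first exact: trace_ball_open.
by split=> [|y []//]; split=> //; rewrite /ball edist_refl.
Qed.

Lemma Xn_open : op (@Xn m.+1).
Proof.
apply: open_local => // x Xx; have [V [oV [Vx _]]] := nbhd_in_ball Xx Rlt_0_1.
by exists V; split => //; split => // y /(open_Xn oV).
Qed.

Lemma tball_open b e : Ln b -> ~ A b -> 0 < e -> op (tball b e).
Proof.
move=> b0 nAb e_gt0; split=> [z|z [->|z_in]]; first exact: tball_Xn.
  split=> [/Pn_Ln_disj /(_ b0) []|]; split=> [/nAb []|_ _].
  by exists e; split => //; lra.
have z_pos : Pn z.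
  by have := (ball_shiftE z b0 e_gt0).1 z_in; have := sqdist_ge0 z b; rewrite /Pn; nra.
have [eps [? inner]] := ball_inner z_in z_pos.
split=> [_|]; first by exists eps; split => // w /inner [? _]; right.
by split=> [/A_Ln|] /(Pn_Ln_disj z_pos).
Qed.

Lemma open_inter U V : op U -> op V -> op (fun x => U x /\ V x).
Proof.
move=> oU oV; apply: open_local => [x [/(open_Xn oU) //]|x [Ux Vx]].
have [oUP [oUA oUL]] := oU.2 x Ux; have [oVP [oVA oVL]] := oV.2 x Vx.
case: (open_Xn oU Ux) => [x_pos|x0]; last case: (classic (A x)) => [Ax|nAx].
- have [e1 [[? ?] ballU]] := oUP x_pos; have [e2 [[? ?] ballV]] := oVP x_pos.
  have := Rmin_l e1 e2; have := Rmin_r e1 e2; have : 0 < Rmin e1 e2 by apply: Rmin_glb_lt.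
  move=> ? ? ?; exists (ball x (Rmin e1 e2)); split; first by apply: ball_open; lra.
  split=> [|y y_in]; first by rewrite /ball edist_refl.
  by split; [apply: ballU | apply: ballV]; rewrite /ball in y_in *; lra.
- have [e1 [? ballU]] := oUA Ax; have [e2 [? ballV]] := oVA Ax.
  have := Rmin_l e1 e2; have := Rmin_r e1 e2; have : 0 < Rmin e1 e2 by apply: Rmin_glb_lt.
  move=> ? ? ?; exists (trace_ball x (Rmin e1 e2)); split; first exact: trace_ball_open.
  split=> [|y [y_in Xy]]; first by split; [rewrite /ball edist_refl | right].
  by split; [apply: ballU | apply: ballV]; rewrite // /ball in y_in *; lra.
- have [e1 [? ballU]] := oUL x0 nAx; have [e2 [? ballV]] := oVL x0 nAx.
  have : 0 < Rmin e1 e2 by apply: Rmin_glb_lt.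
  move=> ?; exists (tball x (Rmin e1 e2)); split; first exact: tball_open.
  split=> [|y y_in]; first by left.
  by split; [apply: ballU | apply: ballV]; apply: tball_mono y_in => //;
    [apply: Rmin_l | apply: Rmin_r].
Qed.

End Topology.

Lemma cont_on_comp {T : Type} (op : (T -> Prop) -> Prop) (Y : T -> Prop) f (g : R -> R) :
  (forall u, continuity_pt g u) -> cont_on op Y f -> cont_on op Y (fun x => g (f x)).
Proof.
move=> g_cont f_cont V oV.
have oW : R_open (fun r => V (g r)).
  move=> r Vgr; have [eps [eps_gt0 ballV]] := oV _ Vgr.
  have [d [d_gt0 near]] := continuity_pt_eps (g_cont r) eps_gt0.
  by exists d; split => // s /near /ballV.
by have [U [oU UV]] := f_cont _ oW; exists U.
Qed.

Lemma z_embedded_of_Cstar {T : Type} (X Y : T -> Prop) (op : (T -> Prop) -> Prop) :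
  (forall y, Y y -> X y) -> Cstar_embedded X op Y -> z_embedded X op Y.
Proof.
move=> YX Cstar Z [f [f_cont Zf]]; pose h t := Rmin (Rabs t) 1.
have h_lip v w : Rabs (h v - h w) <= Rabs (v - w).
  exact: Rle_trans (Rmin1_lip1 _ _) (Rabs_triang_inv2 _ _).
have h_eq0 t : h t = 0 <-> t = 0.
  rewrite /h /Rmin; case: Rle_dec => [_|abs_gt].
    by split=> [/Rabs_eq0|->] //; rewrite Rabs_R0.
  by split=> [|t0]; [lra | move: abs_gt; rewrite t0 Rabs_R0; lra].
have [g [g_cont [_ g_ext]]] := Cstar (fun y => h (f y))
  (cont_on_comp (fun u => continuity_pt_lip1 u h_lip) f_cont)
  ltac:(exists 1 => y _; rewrite Rabs_pos_eq;
        [exact: Rmin_r | apply: Rmin_glb; [exact: Rabs_pos | lra]]).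
exists (fun x => X x /\ g x = 0); split; first by exists g; split.
by move=> y Yy; rewrite Zf g_ext // h_eq0; split=> -[_ f0]; split => //; apply: YX.
Qed.

Section Continuity.
Variables (m : nat) (A : pt m.+1 -> Prop).
Hypothesis A_Ln : forall a, A a -> Ln a.
Local Notation P := (pt m.+1).
Local Notation op := (tau_open A).
Implicit Types (Y : P -> Prop) (f g : P -> R).

Definition cont_at Y f y :=
  forall e, 0 < e -> exists V, op V /\ V y /\ forall z, V z -> Y z -> Rabs (f z - f y) < e.

Definition cont_in Y f := forall y, Y y -> cont_at Y f y.

Lemma cont_onE Y f : (forall y, Y y -> Xn y) -> cont_on op Y f <-> cont_in Y f.
Proof.
move=> YX; split=> [f_cont y Yy e e_gt0|f_cont V oV].
  have oB : R_open (fun r => Rabs (r - f y) < e).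
    move=> r r_near; exists (e - Rabs (r - f y)); split=> [|s s_near]; first lra.
    have := Rabs_triang (s - r) (r - f y).
    have -> : s - r + (r - f y) = s - f y by ring.
    lra.
  have [U [oU UB]] := f_cont _ oB; exists U; split => //; split=> [|z Uz Yz].
    by apply/(UB y Yy); rewrite Rminus_diag Rabs_R0.
  exact/(UB z Yz).
exists (fun x => Xn x /\ exists W, op W /\ W x /\ forall z, W z -> Y z -> V (f z)); split.
  apply: open_local => [x []//|x [_ [W [oW [Wx WV]]]]]; exists W; split => //; split => // z Wz.
  by split; [apply: open_Xn oW Wz | exists W].
move=> y Yy; split=> [/oV [eps [eps_gt0 ballV]]|[_ [W [_ [Wy WV]]]]]; last exact: WV.
have [W [oW [Wy near]]] := f_cont y Yy eps eps_gt0.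
by split; [exact: YX | exists W; split => //; split => // z Wz Yz; apply/ballV/near].
Qed.

Lemma cont_in_subset Y Y' f : (forall y, Y' y -> Y y) -> cont_in Y f -> cont_in Y' f.
Proof.
move=> Y'Y f_cont y Y'y e e_gt0; have [V [oV [Vy near]]] := f_cont y (Y'Y _ Y'y) e e_gt0.
by exists V; split => //; split => // z Vz /Y'Y; apply: near.
Qed.

Lemma cont_in_const Y c : (forall y, Y y -> Xn y) -> cont_in Y (fun _ => c).
Proof.
move=> YX y Yy e e_gt0; exists (@Xn m.+1); split; first exact: Xn_open.
by split=> [|z _ _]; [apply: YX | rewrite Rminus_diag Rabs_R0].
Qed.

Lemma cont_in_comp Y f (g : R -> R) : (forall y, Y y -> continuity_pt g (f y)) ->
  cont_in Y f -> cont_in Y (fun x => g (f x)).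
Proof.
move=> g_cont f_cont y Yy e e_gt0.
have [d [d_gt0 near_g]] := continuity_pt_eps (g_cont y Yy) e_gt0.
have [V [oV [Vy near_f]]] := f_cont y Yy d d_gt0.
by exists V; split => //; split => // z Vz Yz; apply/near_g/near_f.
Qed.

Lemma cont_in_lip1 Y f (g : R -> R) : (forall v w, Rabs (g v - g w) <= Rabs (v - w)) ->
  cont_in Y f -> cont_in Y (fun x => g (f x)).
Proof. by move=> g_lip; apply: cont_in_comp => y _; apply: continuity_pt_lip1. Qed.

Lemma cont_in_add Y f g : cont_in Y f -> cont_in Y g -> cont_in Y (fun x => f x + g x).
Proof.
move=> f_cont g_cont y Yy e e_gt0.
have [V [oV [Vy near_f]]] := f_cont y Yy (e / 2) ltac:(lra).
have [W [oW [Wy near_g]]] := g_cont y Yy (e / 2) ltac:(lra).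
exists (fun x => V x /\ W x); split; first exact: open_inter.
split=> // z [Vz Wz] Yz; have := near_f z Vz Yz; have := near_g z Wz Yz.
have := Rabs_triang (f z - f y) (g z - g y).
have -> : f z - f y + (g z - g y) = f z + g z - (f y + g y) by ring.
lra.
Qed.

Lemma cont_in_scale Y f c : cont_in Y f -> cont_in Y (fun x => c * f x).
Proof.
apply: (cont_in_comp (g := fun t => c * t)) => y _.
exact: (continuity_pt_scal (fun t => t) c _ (continuity_pt_self _)).
Qed.

Lemma cont_in_opp Y f : cont_in Y f -> cont_in Y (fun x => - f x).
Proof.
move=> /(cont_in_scale (-1)); congr cont_in.
by apply: functional_extensionality => x; ring.
Qed.

Lemma cont_in_minus Y f g : cont_in Y f -> cont_in Y g -> cont_in Y (fun x => f x - g x).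
Proof. by move=> f_cont /cont_in_opp; apply: cont_in_add. Qed.

Lemma cont_in_mul Y f g : cont_in Y f -> cont_in Y g -> cont_in Y (fun x => f x * g x).
Proof.
move=> f_cont g_cont.
have sq_cont h : cont_in Y h -> cont_in Y (fun x => h x * h x).
  apply: (cont_in_comp (g := fun t => t * t)) => y _.
  exact: (continuity_pt_mult (fun t => t) (fun t => t) _
            (continuity_pt_self _) (continuity_pt_self _)).
have := cont_in_scale (/ 4) (cont_in_minus (sq_cont _ (cont_in_add f_cont g_cont))
                                            (sq_cont _ (cont_in_minus f_cont g_cont))).
congr cont_in; apply: functional_extensionality => x; field.
Qed.

Lemma cont_in_div Y f g : (forall y, Y y -> g y <> 0) ->
  cont_in Y f -> cont_in Y g -> cont_in Y (fun x => f x / g x).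
Proof.
move=> g_neq0 f_cont g_cont; apply: cont_in_mul => //.
apply: (cont_in_comp (g := Rinv)) g_cont => y Yy.
exact: (continuity_pt_inv (fun t => t) _ (continuity_pt_self _) (g_neq0 y Yy)).
Qed.

Lemma cont_in_of_edist Y f : (forall y, Y y -> Xn y) ->
  (forall y, Y y -> forall e, 0 < e ->
     exists d, 0 < d /\ forall z, Xn z -> edist z y < d -> Rabs (f z - f y) < e) ->
  cont_in Y f.
Proof.
move=> YX f_cont y Yy e e_gt0; have [d [d_gt0 near]] := f_cont y Yy e e_gt0.
have [V [oV [Vy Vd]]] := nbhd_in_ball A (YX _ Yy) d_gt0.
by exists V; split => //; split => // z Vz _; apply: near; [apply: open_Xn oV Vz | apply: Vd].
Qed.

Lemma cont_in_lastc : cont_in (@Xn m.+1) (@lastc m.+1).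
Proof.
apply: cont_in_of_edist => // y _ e e_gt0; exists e; split => // z _.
by apply: Rle_lt_trans (lastc_dist z y).
Qed.

Lemma cont_at_transfer Y Y' f g y : op Y' -> Y' y -> Y y ->
  (forall z, Y' z -> Y z -> f z = g z) -> cont_at Y' g y -> cont_at Y f y.
Proof.
move=> oY' Y'y Yy fg g_cont e e_gt0; have [V [oV [Vy near]]] := g_cont e e_gt0.
exists (fun z => V z /\ Y' z); split; first exact: open_inter.
by split=> // z [Vz Y'z] Yz; rewrite !fg //; apply: near.
Qed.

Lemma cont_in_Ln_of_A f : (forall y, A y -> cont_at (@Ln m.+1) f y) -> cont_in (@Ln m.+1) f.
Proof.
move=> f_contA y y0; case: (classic (A y)) => [/f_contA //|nAy] e e_gt0.
exists (tball y 1); split; first by apply: tball_open => //; lra.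
split=> [|z z_near z0]; first by left.
by rewrite (tball_Ln y0 _ z_near z0) ?Rminus_diag ?Rabs_R0; lra.
Qed.

Lemma open_sublevel f c : cont_in (@Xn m.+1) f -> op (fun x => Xn x /\ f x < c).
Proof.
move=> f_cont; apply: open_local => [x []//|x [Xx fx_lt]].
have [V [oV [Vx near]]] := f_cont x Xx (c - f x) ltac:(lra).
exists V; split => //; split => // z Vz; have Xz := open_Xn oV Vz; split => //.
by have := near z Vz Xz; have := Rle_abs (f z - f x); lra.
Qed.

Lemma open_superlevel f c : cont_in (@Xn m.+1) f -> op (fun x => Xn x /\ c < f x).
Proof.
move=> /cont_in_opp /(open_sublevel (- c)); apply: open_ext => x.
by split=> -[? ?]; split => //; lra.
Qed.

Lemma cont_in_uniform_limit Y (S : nat -> P -> R) G (r : nat -> R) :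
  (forall k, cont_in Y (S k)) -> (forall eps, 0 < eps -> exists k, r k < eps) ->
  (forall x k, Y x -> Rabs (G x - S k x) <= r k) -> cont_in Y G.
Proof.
move=> S_cont r_small S_near y Yy e e_gt0.
have [k rk_small] := r_small (e / 3) ltac:(lra).
have [V [oV [Vy near]]] := S_cont k y Yy (e / 3) ltac:(lra).
exists V; split => //; split => // z Vz Yz.
have := S_near z k Yz; have := S_near y k Yy; have := near z Vz Yz.
have := Rabs_triang (G z - S k z) (S k z - G y).
have := Rabs_triang (S k z - S k y) (S k y - G y); rewrite (Rabs_minus_sym (S k y)).
have -> : S k z - S k y + (S k y - G y) = S k z - G y by ring.
have -> : G z - S k z + (S k z - G y) = G z - G y by ring.
lra.
Qed.

End Continuity.

Section Tietze.
Variables (m : nat) (A : pt m.+1 -> Prop).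
Hypothesis A_Ln : forall a, A a -> Ln a.
Local Notation P := (pt m.+1).
Local Notation op := (tau_open A).
Local Notation cont_in := (cont_in A).

Definition separates_levels (f : P -> R) c (phi : P -> R) :=
  cont_in (@Xn m.+1) phi /\ (forall x, Xn x -> Rabs (phi x) <= 1) /\
  (forall y, Ln y -> f y <= - c -> phi y = -1) /\ (forall y, Ln y -> c <= f y -> phi y = 1).

Definition level_separable :=
  forall f c, cont_in (@Ln m.+1) f -> 0 < c -> exists phi, separates_levels f c phi.

Hypothesis separable : level_separable.

Definition separator f c := epsilon (inhabits (fun _ : P => 0)) (separates_levels f c).

Definition correction f c x := c / 3 * separator f (c / 3) x.

Lemma correction_spec f c : cont_in (@Ln m.+1) f -> 0 < c ->
  (forall y, Ln y -> Rabs (f y) <= c) ->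
  [/\ cont_in (@Xn m.+1) (correction f c),
      forall x, Xn x -> Rabs (correction f c x) <= c / 3 &
      forall y, Ln y -> Rabs (f y - correction f c y) <= 2 / 3 * c].
Proof.
move=> f_cont c_gt0 f_bound.
have [phi_cont [phi_bound [phi_low phi_high]]] : separates_levels f (c / 3) (separator f (c / 3)).
  by apply: epsilon_spec; apply: separable => //; lra.
rewrite /correction; split; first exact: cont_in_scale.
  move=> x /phi_bound; rewrite Rabs_mult (Rabs_pos_eq (c / 3)); last lra.
  by move=> /(Rmult_le_compat_l (c / 3)) => /(_ ltac:(lra)); lra.
move=> y Ly; have := Rabs_le_inv (f_bound y Ly) => f_y; apply: Rabs_le.
have [low|] := Rle_lt_dec (f y) (- (c / 3)); first by rewrite phi_low //; lra.
have [high|] := Rle_lt_dec (c / 3) (f y); first by rewrite phi_high //; lra.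
have := Rabs_le_inv (phi_bound y (or_intror Ly)); nra.
Qed.

Section Extension.
Variables (f : P -> R) (c : R).
Hypotheses (f_cont : cont_in (@Ln m.+1) f) (c_gt0 : 0 < c)
  (f_bound : forall y, Ln y -> Rabs (f y) <= c).

Let radius k := c * (2 / 3) ^ k.

Fixpoint residual k : P -> R :=
  if k is k'.+1 then fun x => residual k' x - correction (residual k') (radius k') x else f.

Fixpoint approx k : P -> R :=
  if k is k'.+1 then fun x => approx k' x + correction (residual k') (radius k') x
  else fun _ => 0.

Lemma radius_gt0 k : 0 < radius k.
Proof. by apply: Rmult_lt_0_compat => //; apply: pow_lt; lra. Qed.

Lemma radiusS k : radius k.+1 = 2 / 3 * radius k.
Proof. by rewrite /radius /=; ring. Qed.

Lemma residual_spec k :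
  cont_in (@Ln m.+1) (residual k) /\ forall y, Ln y -> Rabs (residual k y) <= radius k.
Proof.
elim: k => [|k [res_cont res_bound]].
  by split => // y; rewrite /radius /= Rmult_1_r; apply: f_bound.
have [corr_cont _ corr_res] := correction_spec res_cont (radius_gt0 k) res_bound.
split; first by apply: cont_in_minus => //; apply: cont_in_subset corr_cont => y; right.
by move=> y /corr_res; rewrite radiusS.
Qed.

Lemma approx_Ln k y : Ln y -> approx k y = f y - residual k y.
Proof. by move=> Ly; elim: k => [|k /= ->]; rewrite /=; ring. Qed.

Lemma correction_bound k x : Xn x -> Rabs (correction (residual k) (radius k) x) <= radius k / 3.
Proof.
have [res_cont res_bound] := residual_spec k.
by have [_ corr_bound _] := correction_spec res_cont (radius_gt0 k) res_bound; apply: corr_bound.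
Qed.

Lemma approx_cont k : cont_in (@Xn m.+1) (approx k).
Proof.
elim: k => [|k IHk] /=; first exact: cont_in_const.
have [res_cont res_bound] := residual_spec k.
have [corr_cont _ _] := correction_spec res_cont (radius_gt0 k) res_bound.
exact: cont_in_add.
Qed.

Lemma approx_cauchy x k p : Xn x -> Rabs (approx (k + p) x - approx k x) <= radius k.
Proof.
move=> Xx; suff : Rabs (approx (k + p) x - approx k x) <= radius k - radius (k + p).
  by have := radius_gt0 (k + p); lra.
elim: p => [|p IHp]; first by rewrite addn0 Rminus_diag Rabs_R0; lra.
rewrite addnS /=; have := correction_bound (k + p) Xx.
set d := correction _ _ _; have := Rabs_triang (approx (k + p) x - approx k x) d.
have -> : approx (k + p) x - approx k x + d = approx (k + p) x + d - approx k x by ring.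
by rewrite radiusS; lra.
Qed.

Lemma extension_exists :
  exists G, cont_in (@Xn m.+1) G /\ (forall x, Xn x -> Rabs (G x) <= c) /\
            forall y, Ln y -> G y = f y.
Proof.
have radius_small eps : 0 < eps -> exists k, radius k < eps.
  by apply: geometric_small; lra.
have [G G_near] := uniform_cauchy_limit radius_small (fun x k p => @approx_cauchy x k p).
exists G; split; first exact: cont_in_uniform_limit approx_cont radius_small G_near.
split=> [x /(G_near x 0%N)|y Ly]; first by rewrite /radius /= Rminus_0_r Rmult_1_r.
apply: Rminus_diag_uniq; apply: NNPP => G_neq.
have := Rabs_pos_lt _ G_neq; set d := Rabs (G y - f y) => d_gt0.
have [k rk] := radius_small (d / 2) ltac:(lra).
have := G_near y k (or_intror Ly); have := (residual_spec k).2 y Ly; rewrite approx_Ln //.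
have := Rabs_triang (G y - (f y - residual k y)) (- residual k y); rewrite Rabs_Ropp.
have -> : G y - (f y - residual k y) + - residual k y = G y - f y by ring.
rewrite -/d; lra.
Qed.

End Extension.

Theorem Cstar_of_level_separable : Cstar_embedded (@Xn m.+1) op (@Ln m.+1).
Proof.
move=> f /(cont_onE A f (@Ln_Xn m)) f_cont [M M_bound].
have [G [G_cont [G_bound G_ext]]] := extension_exists f_cont (c := Rabs M + 1)
  ltac:(have := Rabs_pos M; lra) ltac:(by move=> y /M_bound; have := Rle_abs M; lra).
exists G; split; first by apply/cont_onE.
by split => //; exists (Rabs M + 1).
Qed.

End Tietze.

Section ZeroSets.
Variables (m : nat) (A : pt m.+1 -> Prop).
Hypothesis A_Ln : forall a, A a -> Ln a.
Local Notation P := (pt m.+1).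
Local Notation op := (tau_open A).
Local Notation cont_in := (cont_in A).
Hypothesis z_emb : z_embedded (@Xn m.+1) op (@Ln m.+1).

Lemma zero_set_extension f : cont_in (@Ln m.+1) f ->
  exists g, cont_in (@Xn m.+1) g /\ forall y, Ln y -> (g y = 0 <-> f y = 0).
Proof.
move=> f_cont; have [Z' [[g [g_cont Z'g]] trace]] := z_emb (Z := fun y => Ln y /\ f y = 0)
  ltac:(by exists f; split => //; apply/(cont_onE A f (@Ln_Xn m))).
exists g; split; first by apply/(cont_onE A g (fun x Xx => Xx)).
move=> y Ly; split=> [g0|f0].
  by have /(trace y Ly) [] : Z' y by apply/Z'g; split => //; apply: Ln_Xn.
by have /(trace y Ly) /Z'g [] : Ln y /\ f y = 0 by [].
Qed.

(* The term [lastc x] keeps the denominator positive on [Pn], where [g1] and [g2] may both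
   vanish. *)
Lemma separates_levels_ratio f c g1 g2 : 0 < c ->
  cont_in (@Xn m.+1) g1 -> cont_in (@Xn m.+1) g2 ->
  (forall y, Ln y -> g1 y = 0 <-> f y <= - c) -> (forall y, Ln y -> g2 y = 0 <-> c <= f y) ->
  separates_levels A f c
    (fun x => (Rabs (g1 x) - Rabs (g2 x)) / (Rabs (g1 x) + Rabs (g2 x) + lastc x)).
Proof.
move=> c_gt0 g1_cont g2_cont g1_eq0 g2_eq0.
pose den x := Rabs (g1 x) + Rabs (g2 x) + lastc x.
have den_gt0 x : Xn x -> 0 < den x.
  have := Rabs_pos (g1 x); have := Rabs_pos (g2 x); rewrite /den => ? ?.
  case=> [x_pos|x0]; first by rewrite /Pn in x_pos; lra.
  rewrite x0; apply: Rnot_le_lt => den_le.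
  have /(g1_eq0 x x0) : g1 x = 0 by apply: Rabs_eq0; lra.
  have /(g2_eq0 x x0) : g2 x = 0 by apply: Rabs_eq0; lra.
  lra.
have abs_cont g : cont_in (@Xn m.+1) g -> cont_in (@Xn m.+1) (fun x => Rabs (g x)).
  exact: cont_in_lip1 Rabs_triang_inv2.
split; [|split; [|split]].
- apply: (@cont_in_div m A A_Ln _ (fun x => Rabs (g1 x) - Rabs (g2 x)) den).
  + by move=> y /den_gt0; lra.
  + exact (cont_in_minus A_Ln (abs_cont _ g1_cont) (abs_cont _ g2_cont)).
  + exact (cont_in_add A_Ln (cont_in_add A_Ln (abs_cont _ g1_cont) (abs_cont _ g2_cont))
                            (cont_in_lastc A)).
- move=> x Xx; have den_pos := den_gt0 x Xx.
  have lastc_ge0 : 0 <= lastc x by case: Xx; rewrite /Pn /Ln; lra.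
  have := Rabs_pos (g1 x); have := Rabs_pos (g2 x) => ? ?.
  have : (Rabs (g1 x) - Rabs (g2 x)) / den x * den x = Rabs (g1 x) - Rabs (g2 x) by field; lra.
  move: den_pos; rewrite /den; set q := (_ - _) / _ => den_pos q_den.
  by apply: Rabs_le; split; nra.
- move=> y Ly f_low; rewrite (g1_eq0 y Ly).2 // Rabs_R0 Ly.
  have : g2 y <> 0 by move=> /(g2_eq0 y Ly); lra.
  by move=> /Rabs_no_R0 ?; field.
- move=> y Ly f_high; rewrite (g2_eq0 y Ly).2 // Rabs_R0 Ly.
  have : g1 y <> 0 by move=> /(g1_eq0 y Ly); lra.
  by move=> /Rabs_no_R0 ?; field.
Qed.

Theorem level_separable_of_z_embedded : level_separable A.
Proof.
move=> f c f_cont c_gt0; have cst_cont := cont_in_const A c (@Ln_Xn m).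
have [g1 [g1_cont g1_eq0]] := zero_set_extension (cont_in_lip1 (g := fun t => Rmax t 0)
  Rmax0_lip1 (cont_in_add A_Ln f_cont cst_cont)).
have [g2 [g2_cont g2_eq0]] := zero_set_extension (cont_in_lip1 (g := fun t => Rmax t 0)
  Rmax0_lip1 (cont_in_minus A_Ln cst_cont f_cont)).
eexists; apply: (separates_levels_ratio c_gt0 g1_cont g2_cont) => y.
  by move=> /g1_eq0 ->; rewrite Rmax0_eq0; split => ?; lra.
by move=> /g2_eq0 ->; rewrite Rmax0_eq0; split => ?; lra.
Qed.

End ZeroSets.

Section Urysohn.
Variables (m : nat) (A : pt m.+1 -> Prop).
Hypothesis A_Ln : forall a, A a -> Ln a.
Local Notation P := (pt m.+1).
Local Notation op := (tau_open A).
Local Notation closed := (closed_in (@Xn m.+1) op).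
Local Notation cont_in := (cont_in A).
Hypothesis normal : normal_space (@Xn m.+1) op.

Definition shrinking (F U : P -> Prop) (VC : (P -> Prop) * (P -> Prop)) :=
  [/\ op VC.1, closed VC.2, (forall x, F x -> VC.1 x), (forall x, VC.1 x -> VC.2 x) &
      forall x, VC.2 x -> U x].

Lemma shrinking_exists F U : closed F -> op U -> (forall x, F x -> U x) ->
  exists VC, shrinking F U VC.
Proof.
move=> cF oU FU; have cUC := closedC_of_open oU.
have [V [V' [oV [oV' [FV [UCV' VV']]]]]] := normal cF cUC (fun x Fx UCx => UCx.2 (FU x Fx)).
exists (V, fun x => Xn x /\ ~ V' x); split => //=; first exact: closedC_of_open.
  by move=> x Vx; split=> [|/(VV' x Vx)]; [exact: open_Xn oV Vx |].
by move=> x [Xx nV'x]; apply: NNPP => nUx; apply/nV'x/UCV'.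
Qed.

Variables (C D : P -> Prop).
Hypotheses (closedC : closed C) (closedD : closed D) (CD : forall x, C x -> D x -> False).

Let full := (@Xn m.+1, @Xn m.+1).
Let W x := Xn x /\ ~ D x.

Definition shrink F U := epsilon (inhabits full) (shrinking F U).

(* [level n k] is the pair (open U, closed F) of the dyadic k / 2^n, with U inside F inside
   the U of the next index: stage n+1 keeps the even indices and shrinks between neighbours at
   the odd ones; the index 2^n carries X \ D and the larger indices carry X. *)
Fixpoint level n : nat -> (P -> Prop) * (P -> Prop) :=
  if n is n'.+1 then fun j =>
    if (2 ^ n'.+1 < j)%N then full
    else if odd j then shrink (level n' j./2).2 (level n' (j./2).+1).1 else level n' j./2
  else fun k => if k == 0%N then shrink C W else if k == 1%N then (W, W) else full.

Local Notation U n k := (level n k).1.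
Local Notation F n k := (level n k).2.

Record dyadic_chain n : Prop := {
  chain_open : forall k, op (U n k);
  chain_closure : forall k x, U n k x -> F n k x;
  chain_closed : forall k, (k < 2 ^ n)%N -> closed (F n k);
  chain_incr : forall k x, F n k x -> U n k.+1 x;
  chain_top : level n (2 ^ n) = (W, W);
  chain_above : forall k, (2 ^ n < k)%N -> level n k = full;
  chain_bottom : forall x, C x -> U n 0 x }.

Lemma W_open : op W.
Proof. exact: closedD.2. Qed.

Lemma shrink_spec F' U' : closed F' -> op U' -> (forall x, F' x -> U' x) ->
  shrinking F' U' (shrink F' U').
Proof. by move=> cF oU FU; apply: epsilon_spec; apply: shrinking_exists. Qed.

Lemma chain0 : dyadic_chain 0.
Proof.
have [oV cV CV VV' V'W] := shrink_spec closedC W_open (fun x Cx => conj (closedC.1 x Cx) (CD Cx)).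
split => //.
- by case=> [|[|k]] /=; [| exact: W_open | exact: Xn_open].
- by case=> [|[|k]] /= x; [exact: VV' | |].
- by case.
- by case=> [|[|k]] /= x; [exact: V'W | case |].
- by case=> [|[|k]].
Qed.

Lemma levelS_double n k : (k <= 2 ^ n)%N -> level n.+1 k.*2 = level n k.
Proof. by move=> k_le /=; rewrite expnS mul2n ltn_double ltnNge k_le odd_double doubleK. Qed.

Lemma levelS_odd n k : (k < 2 ^ n)%N ->
  level n.+1 k.*2.+1 = shrink (F n k) (U n k.+1).
Proof.
by move=> k_lt /=; rewrite expnS mul2n ltnNge ltn_double k_lt /= odd_double uphalf_double.
Qed.

Lemma levelS_above n j : (2 ^ n.+1 < j)%N -> level n.+1 j = full.
Proof. by move=> /= ->. Qed.

Lemma dyadic_cases n j : (2 ^ n.+1 < j)%N \/ (exists2 k, j = k.*2 & (k <= 2 ^ n)%N) \/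
  (exists2 k, j = k.*2.+1 & (k < 2 ^ n)%N).
Proof.
case: (ltnP (2 ^ n.+1) j) => [|j_le]; [by left | right].
move: j_le; rewrite -(odd_double_half j) expnS mul2n.
by case: (odd j) => /= j_le; [right | left]; exists j./2;
  rewrite // ?ltn_double ?leq_double in j_le *.
Qed.

Lemma chainS n : dyadic_chain n -> dyadic_chain n.+1.
Proof.
case=> oU UF cF FU top above bottom.
have shrinkS k : (k < 2 ^ n)%N -> shrinking (F n k) (U n k.+1) (level n.+1 k.*2.+1).
  by move=> k_lt; rewrite levelS_odd //; apply: shrink_spec (cF k k_lt) (oU _) (FU k).
split.
- move=> j; case: (dyadic_cases n j) =>
    [/levelS_above ->|[[k -> /levelS_double ->]|[k -> /shrinkS]]].
  + exact: Xn_open.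
  + exact: oU.
  + by case.
- move=> j x; case: (dyadic_cases n j) =>
    [/levelS_above ->|[[k -> /levelS_double ->]|[k -> /shrinkS]]].
  + by [].
  + exact: UF.
  + by case=> _ _ _ VV' _; apply: VV'.
- move=> j j_lt; case: (dyadic_cases n j) => [j_gt|[[k j_eq k_le]|[k -> /shrinkS []//]]].
    by lia.
  by move: j_lt; rewrite j_eq expnS mul2n ltn_double levelS_double // => /cF.
- move=> j x; case: (dyadic_cases n j) => [j_gt|[[k -> k_le]|[k -> k_lt]]].
  + by rewrite !levelS_above // ltnW.
  + rewrite levelS_double //; case: (ltnP k (2 ^ n)) => [k_lt|k_ge].
      by case: (shrinkS k k_lt) => _ _ FV _ _; apply: FV.
    have k_top : k = (2 ^ n)%N by apply/eqP; rewrite eqn_leq k_le.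
    have top_next : level n.+1 (2 ^ n).*2.+1 = full.
      by apply: levelS_above; rewrite expnS mul2n ltnSn.
    by rewrite k_top top top_next; case.
  + by case: (shrinkS k k_lt) => _ _ _ _ V'U /V'U; rewrite -levelS_double.
- by rewrite expnS mul2n levelS_double.
- by move=> j /levelS_above.
- by move=> x /bottom; rewrite -[0%N]/(0.*2)%N levelS_double.
Qed.

Lemma chain n : dyadic_chain n.
Proof. by elim: n => [|n /chainS]; [exact: chain0 |]. Qed.

Lemma level_double n k : level n.+1 k.*2 = level n k.
Proof.
case: (leqP k (2 ^ n)) => [/levelS_double //|k_gt].
by rewrite levelS_above ?(chain_above (chain n)) // expnS mul2n ltn_double.
Qed.

Lemma level_lift n p k : level (n + p) (k * 2 ^ p) = level n k.
Proof. by elim: p => [|p IHp]; rewrite ?addn0 ?muln1 // addnS expnS mulnCA mul2n level_double. Qed.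

Lemma U_mono n j k : (j <= k)%N -> forall x, U n j x -> U n k x.
Proof.
move=> /subnKC <-; elim: (k - j)%N => [|i IHi] x; first by rewrite addn0.
by move=> /IHi; rewrite addnS; have [_ UF _ FU _ _ _] := chain n; move=> /UF /FU.
Qed.

Lemma U_cross p j n k : (j * 2 ^ n <= k * 2 ^ p)%N -> forall x, U p j x -> U n k x.
Proof. by move=> le x; rewrite -(level_lift p n j) -(level_lift n p k) addnC; apply: U_mono. Qed.

Definition dyadic n k := Rmin (INR k / 2 ^ n) 1.

Definition urysohn x := rinf (fun r => exists n k, U n k x /\ r = dyadic n k).

Lemma dyadic_ge0 n k : 0 <= dyadic n k.
Proof.
apply: Rmin_glb; last lra.
by apply: Rmult_le_pos; [exact: pos_INR | left; apply: Rinv_0_lt_compat; apply: pow2_gt0].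
Qed.

Lemma urysohn_glb x : Xn x ->
  is_glb (fun r => exists n k, U n k x /\ r = dyadic n k) (urysohn x).
Proof.
move=> Xx; apply: (rinf_glb (b := 0)) => [|r [n [k [_ ->]]]]; last exact: dyadic_ge0.
by exists (dyadic 0 2), 0%N, 2%N; rewrite (chain_above (chain 0)).
Qed.

Lemma urysohn_le x n k : Xn x -> U n k x -> urysohn x <= dyadic n k.
Proof. by move=> Xx Ux; apply: (urysohn_glb Xx).1; exists n, k. Qed.

Lemma urysohn_ge x n k : Xn x -> ~ U n k x -> dyadic n k <= urysohn x.
Proof.
move=> Xx nUx; apply: (urysohn_glb Xx).2 => r [p [j [Ux ->]]].
case: (Rle_lt_dec (INR k / 2 ^ n) (INR j / 2 ^ p)) => [le|lt]; first exact: Rle_min_compat_r.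
case: nUx; apply: (U_cross (p := p) (j := j)) => //; apply/leP/INR_le.
rewrite -!multE !mult_INR !INR_exp2.
have := pow2_gt0 n; have := pow2_gt0 p => ? ?.
have -> : INR j * 2 ^ n = INR j / 2 ^ p * (2 ^ p * 2 ^ n) by field; lra.
have -> : INR k * 2 ^ p = INR k / 2 ^ n * (2 ^ p * 2 ^ n) by field; lra.
by apply: Rmult_le_compat_r; [apply: Rmult_le_pos | ]; lra.
Qed.

Lemma urysohn_range x : Xn x -> 0 <= urysohn x <= 1.
Proof.
move=> Xx; split; first by apply: (urysohn_glb Xx).2 => r [n [k [_ ->]]]; apply: dyadic_ge0.
apply: Rle_trans (Rmin_r (INR 2 / 2 ^ 0) 1).
by apply: urysohn_le; rewrite ?(chain_above (chain 0)).
Qed.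

Lemma urysohn_C x : C x -> urysohn x = 0.
Proof.
move=> Cx; have Xx := closedC.1 x Cx; have := urysohn_range Xx.
have := urysohn_le Xx (chain_bottom (chain 0) Cx).
by rewrite /dyadic /= /Rdiv Rmult_0_l Rmin_left; lra.
Qed.

Lemma urysohn_D x : D x -> urysohn x = 1.
Proof.
move=> Dx; have Xx := closedD.1 x Dx; have := urysohn_range Xx.
have := @urysohn_ge x 0 1 Xx (fun Wx : W x => Wx.2 Dx).
by rewrite /dyadic /= Rmin_left; lra.
Qed.

Lemma dyadic_gap n k : (2 <= k)%N -> dyadic n k - 2 / 2 ^ n <= dyadic n (k - 2).
Proof.
move=> k_ge; have := pow2_gt0 n => ?.
have INR_k : INR k = INR (k - 2) + 2 by rewrite -{1}(subnK k_ge) -plusE plus_INR.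
rewrite /dyadic INR_k Rdiv_plus_distr; set a := INR (k - 2) / 2 ^ n; set d := 2 / 2 ^ n.
have d_ge0 : 0 <= d by apply: Rmult_le_pos; [lra | left; apply: Rinv_0_lt_compat].
by rewrite /Rmin; case: Rle_dec; case: Rle_dec => ? ?; lra.
Qed.

Lemma dyadic_small n k : (k < 2)%N -> dyadic n k <= 2 / 2 ^ n.
Proof.
move=> k_lt; apply: Rle_trans (Rmin_l _ _) _.
apply: Rmult_le_compat_r; first by left; apply: Rinv_0_lt_compat; apply: pow2_gt0.
by apply: (le_INR k 2); apply/leP; apply: ltnW.
Qed.

Lemma urysohn_window n k x : Xn x -> U n k x -> (k < 2)%N \/ ~ U n (k - 2) x ->
  dyadic n k - 2 / 2 ^ n <= urysohn x <= dyadic n k.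
Proof.
move=> Xx Ux low; split; last exact: urysohn_le.
case: (ltnP k 2) => [/(dyadic_small n)|k_ge]; first by have := urysohn_range Xx; lra.
case: low => [|nUx]; first by rewrite ltnNge k_ge.
by have := urysohn_ge Xx nUx; have := dyadic_gap n k_ge; lra.
Qed.

Lemma urysohn_cont : cont_in (@Xn m.+1) urysohn.
Proof.
move=> x Xx e e_gt0.
have [n small] : exists n, 2 / 2 ^ n < e.
  have [n] := geometric_small 2 (eps := e) (q := / 2) ltac:(lra) e_gt0.
  by rewrite pow_inv; exists n.
have U_top : U n (2 ^ n).+1 x by rewrite (chain_above (chain n)).
have [k0 [[Uk0 k0_min] _]] := dec_inh_nat_subset_has_unique_least_element (fun k => U n k x)
  (fun k => classic _) (ex_intro (fun k => U n k x) _ U_top).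
have k0_le : (k0 <= (2 ^ n).+1)%N by apply/leP/k0_min.
have x_window : (k0 < 2)%N \/ ~ U n (k0 - 2) x.
  by case: (ltnP k0 2) => [|k0_ge]; [left | right => /k0_min /leP; lia].
have [V [oV [Vx V_window]]] : exists V, op V /\ V x /\
    forall y, V y -> U n k0 y /\ ((k0 < 2)%N \/ ~ U n (k0 - 2) y).
  case: (ltnP k0 2) => [k0_lt|k0_ge].
    exists (U n k0); split; first exact: (chain_open (chain n)).
    by split=> // y Uy; split; [| left].
  exists (fun y => U n k0 y /\ Xn y /\ ~ F n (k0 - 2) y); split.
    apply: open_inter => //; first exact: (chain_open (chain n)).
    by have [] := chain_closed (chain n) (k := (k0 - 2)%N) ltac:(lia).
  split=> [|y [Uy [_ nFy]]]; last by split => //; right => /(chain_closure (chain n)).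
  split=> //; split=> // /(chain_incr (chain n)).
  have -> : (k0 - 2).+1 = k0.-1 by lia.
  by move=> /k0_min /leP; lia.
exists V; split => //; split => // y Vy Xy; have [Uy y_window] := V_window y Vy.
have := urysohn_window Xy Uy y_window; have := urysohn_window Xx Uk0 x_window.
by move=> ? ?; apply: Rabs_def1; lra.
Qed.

End Urysohn.

Section NormalSeparation.
Variables (m : nat) (A : pt m.+1 -> Prop).
Hypothesis A_Ln : forall a, A a -> Ln a.
Local Notation P := (pt m.+1).
Local Notation op := (tau_open A).
Local Notation closed := (closed_in (@Xn m.+1) op).
Local Notation cont_in := (cont_in A).

Lemma closed_Ln_sublevel f a : cont_in (@Ln m.+1) f -> closed (fun x => Ln x /\ f x <= a).
Proof.
move=> f_cont; split=> [x [/Ln_Xn //]|].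
apply: open_local => [x []//|x [[x_pos|x0] nfx]].
  exists (@Pn m.+1); split; first exact: Pn_open.
  by split=> // z z_pos; split; [left | case=> /(Pn_Ln_disj z_pos)].
have fx_gt : a < f x by apply: Rnot_le_lt => fx_le; apply: nfx.
have [V [oV [Vx near]]] := f_cont x x0 (f x - a) ltac:(lra).
exists V; split => //; split => // z Vz; split; first exact: open_Xn oV Vz.
case=> Lz fz_le; have := near z Vz Lz; have := Rle_abs (- (f z - f x)).
by rewrite Rabs_Ropp; lra.
Qed.

Theorem level_separable_of_normal : normal_space (@Xn m.+1) op -> level_separable A.
Proof.
move=> normal f c f_cont c_gt0.
have cC := closed_Ln_sublevel (- c) f_cont.
have cD : closed (fun x => Ln x /\ c <= f x).
  apply: closed_ext (closed_Ln_sublevel (- c) (cont_in_opp f_cont)) => x.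
  by split=> -[? ?]; split => //; lra.
have CD x : Ln x /\ f x <= - c -> Ln x /\ c <= f x -> False by move=> [_ ?] [_ ?]; lra.
exists (fun x => 2 * urysohn A (fun x => Ln x /\ f x <= - c) (fun x => Ln x /\ c <= f x) x - 1).
split; [|split; [|split]].
- exact (cont_in_minus A_Ln (cont_in_scale 2 (urysohn_cont A_Ln normal cC cD CD))
                          (cont_in_const A 1 (fun x Xx => Xx))).
- move=> x /(urysohn_range normal cC cD CD) range; apply: Rabs_le; lra.
- by move=> y Ly f_low; rewrite (urysohn_C normal cC cD CD (conj Ly f_low)); lra.
- by move=> y Ly f_high; rewrite (urysohn_D normal cC cD CD (conj Ly f_high)); lra.
Qed.

End NormalSeparation.

Section LnSeparation.
Variables (m : nat) (A : pt m.+1 -> Prop).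
Hypothesis A_Ln : forall a, A a -> Ln a.
Local Notation P := (pt m.+1).
Local Notation op := (tau_open A).
Local Notation closed := (closed_in (@Xn m.+1) op).
Local Notation cont_in := (cont_in A).

Lemma dist_set_cont (S : P -> Prop) : (exists s, S s) -> cont_in (@Xn m.+1) (dist_set S).
Proof.
move=> S_ne; apply: cont_in_of_edist => // y _ e e_gt0; exists e; split => // z _ z_near.
have := dist_set_lip S_ne y z; have := dist_set_lip S_ne z y; rewrite edist_sym.
by move=> ? ?; apply: Rabs_def1; lra.
Qed.

Lemma closed_far_from_A (H : P -> Prop) y : closed H -> A y -> ~ H y ->
  exists eps, 0 < eps /\ forall z, Xn z -> H z -> eps <= edist y z.
Proof.
move=> [_ oHC] Ay nHy; have [_ [oA _]] := oHC.2 y (conj (Ln_Xn (A_Ln Ay)) nHy).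
have [eps [eps_gt0 ballHC]] := oA Ay; exists eps; split => // z Xz Hz.
by apply: Rnot_lt_le => near; have [] := ballHC z ltac:(by rewrite /ball edist_sym) Xz.
Qed.

Lemma dist_set_gt0_at_A (H : P -> Prop) y : closed H -> (exists s, Ln s /\ H s) -> A y -> ~ H y ->
  0 < dist_set (fun x => Ln x /\ H x) y.
Proof.
move=> cH HL_ne Ay nHy; have [eps [eps_gt0 far]] := closed_far_from_A cH Ay nHy.
apply: Rlt_le_trans eps_gt0 _; apply: (dist_set_lb HL_ne) => s [s0 Hs].
by apply: far => //; apply: Ln_Xn.
Qed.

(* Away from [A] the points of [Ln] are isolated in [Ln], so only the points of [A], which are
   at positive Euclidean distance from [H] or from [K], constrain [f]. *)
Lemma Ln_separation_nonempty (H K : P -> Prop) : closed H -> closed K ->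
  (forall x, H x -> K x -> False) -> (exists s, Ln s /\ H s) -> (exists s, Ln s /\ K s) ->
  exists f, cont_in (@Ln m.+1) f /\ (forall x, Ln x -> H x -> f x <= -1) /\
            (forall x, Ln x -> K x -> 1 <= f x).
Proof.
move=> cH cK HK HL_ne KL_ne.
pose dH := dist_set (fun x => Ln x /\ H x); pose dK := dist_set (fun x => Ln x /\ K x).
pose g x := 2 * dH x / (dH x + dK x) - 1.
pose f x := if excluded_middle_informative (Ln x /\ K x) then 1 else g x.
pose Y' x := Xn x /\ 0 < dH x + dK x.
have dH_cont := dist_set_cont HL_ne; have dK_cont := dist_set_cont KL_ne.
have oY' : op Y' by apply: open_superlevel; exact: cont_in_add.
have g_cont : cont_in Y' g.
  apply: (cont_in_minus A_Ln (f := fun x => 2 * dH x / (dH x + dK x)) (g := fun _ => 1)).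
  2: exact: cont_in_const (fun x (Y'x : Y' x) => Y'x.1).
  apply: (cont_in_div A_Ln (f := fun x => 2 * dH x) (g := fun x => dH x + dK x)).
  - by move=> y [_ ?]; lra.
  - by apply: cont_in_scale; apply: cont_in_subset dH_cont => x [].
  - by apply: cont_in_subset (cont_in_add A_Ln dH_cont dK_cont) => x [].
have fg z : Y' z -> Ln z -> f z = g z.
  rewrite /f; case: excluded_middle_informative => // KLz [_ pos] _.
  have dKz : dK z = 0 := dist_set_eq0 KL_ne KLz.
  by rewrite /g /= dKz Rplus_0_r in pos *; field; lra.
exists f; split; [|split].
- apply: (cont_in_Ln_of_A A_Ln) => y Ay.
  have Y'y : Y' y.
    have dH_ge0 : 0 <= dH y := dist_set_ge0 HL_ne y.
    have dK_ge0 : 0 <= dK y := dist_set_ge0 KL_ne y.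
    split; first exact/Ln_Xn/A_Ln.
    case: (classic (H y)) => [Hy|nHy].
      by have : 0 < dK y := dist_set_gt0_at_A cK KL_ne Ay (HK y Hy); lra.
    by have : 0 < dH y := dist_set_gt0_at_A cH HL_ne Ay nHy; lra.
  exact: (cont_at_transfer A_Ln oY' Y'y (A_Ln Ay) fg (g_cont y Y'y)).
- move=> x x0 Hx; rewrite /f; case: excluded_middle_informative => [KLx|_] /=.
    by case: (HK x Hx KLx.2).
  rewrite /g; have -> : dH x = 0 := dist_set_eq0 HL_ne (conj x0 Hx).
  by rewrite Rmult_0_r /Rdiv Rmult_0_l; lra.
- move=> x x0 Kx; rewrite /f; case: excluded_middle_informative => [_|nKLx] /=; first lra.
  by case: nKLx.
Qed.

Lemma Ln_separation (H K : P -> Prop) : closed H -> closed K -> (forall x, H x -> K x -> False) ->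
  exists f, cont_in (@Ln m.+1) f /\ (forall x, Ln x -> H x -> f x <= -1) /\
            (forall x, Ln x -> K x -> 1 <= f x).
Proof.
move=> cH cK HK.
case: (classic (exists s, Ln s /\ H s)) => [HL_ne|HL_empty]; last first.
  exists (fun _ => 1); split; first exact: cont_in_const (@Ln_Xn m).
  by split=> [x x0 Hx|x _ _]; [case: HL_empty; exists x | lra].
case: (classic (exists s, Ln s /\ K s)) => [KL_ne|KL_empty]; first exact: Ln_separation_nonempty.
exists (fun _ => -1); split; first exact: cont_in_const (@Ln_Xn m).
by split=> [x _ _|x x0 Kx]; [lra | case: KL_empty; exists x].
Qed.

End LnSeparation.

Section Normality.
Variables (m : nat) (A : pt m.+1 -> Prop).
Hypothesis A_Ln : forall a, A a -> Ln a.
Local Notation P := (pt m.+1).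
Local Notation op := (tau_open A).
Local Notation closed := (closed_in (@Xn m.+1) op).
Local Notation cont_in := (cont_in A).
Implicit Types (H K S : P -> Prop) (phi : P -> R).

Definition radius_spec K x r := [/\ 0 < r, 2 * r < lastc x & forall z, ball x (2 * r) z -> ~ K z].

Definition sep_radius K x := epsilon (inhabits 0) (radius_spec K x).

Lemma sep_radius_spec K x : closed K -> Pn x -> ~ K x -> radius_spec K x (sep_radius K x).
Proof.
move=> [_ oKC] x_pos nKx; apply: epsilon_spec.
have [oP _] := oKC.2 x (conj (or_introl x_pos) nKx).
have [eps [[eps_gt0 eps_lt] ballKC]] := oP x_pos.
exists (eps / 2); split; [lra | lra | move=> z z_near].
by have [] := ballKC z ltac:(by rewrite /ball in z_near *; lra).
Qed.

Definition ball_hull H K z := exists2 x, H x /\ Pn x & ball x (sep_radius K x) z.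

Definition exterior S z := exists V, op V /\ V z /\ forall w, V w -> ~ S w.

Lemma ball_hull_open H K : closed K -> (forall x, H x -> K x -> False) -> op (ball_hull H K).
Proof.
move=> cK HK; apply: (open_Pn_local A_Ln) => [z [x [Hx x_pos] z_near]|z [x [Hx x_pos] z_near]].
  have [? ? _] := sep_radius_spec cK x_pos (HK x Hx).
  by apply: ball_Pn x_pos _ z_near; lra.
have [? ? _] := sep_radius_spec cK x_pos (HK x Hx).
have [eps [? inner]] := ball_inner z_near ltac:(by apply: ball_Pn x_pos _ z_near; lra).
by exists eps; split => // w /inner [w_near _]; exists x.
Qed.

Lemma ball_hull_disj H K z : closed H -> closed K -> (forall x, H x -> K x -> False) ->
  ball_hull H K z -> ball_hull K H z -> False.
Proof.
move=> cH cK HK [x [Hx x_pos] zx] [y [Ky y_pos] zy].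
have [_ _ x_far] := sep_radius_spec cK x_pos (HK x Hx).
have [_ _ y_far] := sep_radius_spec cH y_pos (fun Hy => HK y Hy Ky).
rewrite /ball in zx zy; have := edist_triangle x z y; rewrite (edist_sym x z) => tri.
case: (Rle_lt_dec (sep_radius H y) (sep_radius K x)) => le.
  by apply: (x_far y) => //; rewrite /ball edist_sym; lra.
by apply: (y_far x) => //; rewrite /ball; lra.
Qed.

Lemma ball_hull_radius H K y h : closed H -> K y -> Pn y -> H h ->
  (forall x, H x -> K x -> False) -> 2 * sep_radius H y <= edist h y.
Proof.
move=> cH Ky y_pos Hh HK; have [_ _ y_far] := sep_radius_spec cH y_pos (fun Hy => HK y Hy Ky).
by apply: Rnot_lt_le => near; apply: (y_far h) => //; rewrite /ball edist_sym.
Qed.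

(* At a point of [A] the balls of the hull are kept away by the Euclidean gap to [K]; at a point
   of [Ln] outside [A] they are kept out of a small tangent ball by [tangent_ball_gap]. *)
Lemma ball_hull_far H K h : closed H -> closed K -> (forall x, H x -> K x -> False) ->
  H h -> Ln h -> exterior (ball_hull K H) h.
Proof.
move=> cH cK HK Hh h0; have nKh : ~ K h by move/(HK h Hh).
case: (classic (A h)) => [Ah|nAh].
  have [eps [eps_gt0 far]] := closed_far_from_A A_Ln cK Ah nKh.
  exists (trace_ball h (eps / 2)); split; first exact: trace_ball_open.
  split=> [|w [w_near _] [y [Ky y_pos] wy]].
    by split; [rewrite /ball edist_refl; lra | right].
  have := ball_hull_radius cH Ky y_pos Hh HK; have := far y (or_introl y_pos) Ky.
  have := edist_triangle h w y; rewrite /ball (edist_sym h w) in w_near wy *; lra.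
have [_ [_ oL]] := cK.2.2 h (conj (Ln_Xn h0) nKh); have [eps [eps_gt0 tballKC]] := oL h0 nAh.
exists (tball h (eps / 6)); split; first by apply: tball_open => //; lra.
split=> [|w w_near [y [Ky y_pos] wy]]; first by left.
have [r_gt0 r_lt _] := sep_radius_spec cH y_pos (fun Hy => HK y Hy Ky).
have w_pos : Pn w by apply: ball_Pn y_pos _ wy; lra.
have eps6_gt0 : 0 < eps / 6 by lra.
have [wh|[w_close _]] := tball_cases h0 eps6_gt0 w_near.
  by rewrite wh in w_pos; case: (Pn_Ln_disj w_pos h0).
have y_far : 2 * eps * lastc y <= sqdist y h.
  apply: Rnot_lt_le => /(ball_shiftE y h0 eps_gt0) y_near.
  by have [] := tballKC y (or_intror y_near).
rewrite -edist_sqr in w_close; rewrite -edist_sqr edist_sym in y_far.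
apply: (tangent_ball_gap eps_gt0 (edist_ge0 h y) w_close y_far wy).
- exact: ball_hull_radius cH Ky y_pos Hh HK.
- exact: r_lt.
- by have := lastc_near y w; lra.
- by have := edist_triangle h w y; rewrite (edist_sym h w).
Qed.

Definition sep_nbhd H K phi z :=
  ball_hull H K z \/ (Xn z /\ phi z < 0 /\ exterior (ball_hull K H) z).

Lemma sep_nbhd_open H K phi : closed K -> (forall x, H x -> K x -> False) ->
  cont_in (@Xn m.+1) phi -> op (sep_nbhd H K phi).
Proof.
move=> cK HK phi_cont; have oHull := ball_hull_open cK HK.
apply: open_local => [z [/(open_Xn oHull) //|[]//]|z [hull_z|[Xz [phi_z [V [oV [Vz V_far]]]]]]].
  by exists (ball_hull H K); split => //; split => // w; left.
exists (fun w => (Xn w /\ phi w < 0) /\ V w); split.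
  by apply: open_inter => //; apply: open_sublevel.
split=> // w [[Xw phi_w] Vw]; right; split => //; split => //.
by exists V.
Qed.

Lemma sep_nbhd_cover H K phi : closed H -> closed K -> (forall x, H x -> K x -> False) ->
  (forall x, Ln x -> H x -> phi x < 0) -> forall x, H x -> sep_nbhd H K phi x.
Proof.
move=> cH cK HK phi_neg x Hx; case: (cH.1 x Hx) => [x_pos|x0].
  have [r_gt0 _ _] := sep_radius_spec cK x_pos (HK x Hx).
  by left; exists x => //; rewrite /ball edist_refl.
by right; split; [right | split; [apply: phi_neg | apply: ball_hull_far]].
Qed.

Lemma sep_nbhd_disj H K phi z : closed H -> closed K -> (forall x, H x -> K x -> False) ->
  sep_nbhd H K phi z -> sep_nbhd K H (fun x => - phi x) z -> False.
Proof.
move=> cH cK HK [hull_HK|[_ [phi_neg [V [_ [Vz V_far]]]]]]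
  [hull_KH|[_ [phi_pos [V' [_ [V'z V'_far]]]]]].
- exact: ball_hull_disj cH cK HK hull_HK hull_KH.
- exact: V'_far z V'z hull_HK.
- exact: V_far z Vz hull_KH.
- lra.
Qed.

Theorem normal_of_z_embedded : z_embedded (@Xn m.+1) op (@Ln m.+1) -> normal_space (@Xn m.+1) op.
Proof.
move=> z_emb H K cH cK HK; have KH x : K x -> H x -> False by move=> Kx /HK /(_ Kx).
have [f [f_cont [f_H f_K]]] := Ln_separation A_Ln cH cK HK.
have [phi [phi_cont [_ [phi_H phi_K]]]] := level_separable_of_z_embedded A_Ln z_emb f_cont Rlt_0_1.
exists (sep_nbhd H K phi), (sep_nbhd K H (fun x => - phi x)).
split; first exact: sep_nbhd_open.
split; first by apply: sep_nbhd_open => //; apply: cont_in_opp.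
split; first by apply: sep_nbhd_cover => // x x0 /(f_H x x0) /(phi_H x x0) ->; lra.
split; first by apply: sep_nbhd_cover => // x x0 /(f_K x x0) /(phi_K x x0) ->; lra.
by move=> x; apply: sep_nbhd_disj.
Qed.

End Normality.

Theorem normal_Cstar_z_embedded (m : nat) (A : pt m.+1 -> Prop) : (forall a, A a -> Ln a) ->
  (normal_space (@Xn m.+1) (tau_open A) <-> Cstar_embedded (@Xn m.+1) (tau_open A) (@Ln m.+1)) /\
  (Cstar_embedded (@Xn m.+1) (tau_open A) (@Ln m.+1) <->
   z_embedded (@Xn m.+1) (tau_open A) (@Ln m.+1)).
Proof.
move=> A_Ln; have z_of_Cstar := z_embedded_of_Cstar (@Ln_Xn m) (op := tau_open A).
split; split.
- by move=> /(level_separable_of_normal A_Ln) /(Cstar_of_level_separable A_Ln).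
- by move=> /z_of_Cstar /(normal_of_z_embedded A_Ln).
- exact: z_of_Cstar.
- by move=> /(level_separable_of_z_embedded A_Ln) /(Cstar_of_level_separable A_Ln).
Qed.

Theorem mainTheorem7 (n : nat) (A : pt n -> Prop) :
  (2 <= n)%N ->
  (forall a, A a -> Ln a) ->
  (normal_space (@Xn n) (tau_open A) <-> Cstar_embedded (@Xn n) (tau_open A) (@Ln n)) /\
  (Cstar_embedded (@Xn n) (tau_open A) (@Ln n) <-> z_embedded (@Xn n) (tau_open A) (@Ln n)).
Proof. by case: n A => [//|m] A _; apply: normal_Cstar_z_embedded. Qed.
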